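(* Let $\mathbf{k}$ be a field, $p\ge3$ and $q\ge1$ integers, $S=\mathbf{k}[e_1,\dots,e_{qp}]$, and $L=\bigcap_{j=1}^{(q-1)p+1}\langle e_j,\dots,e_{j+p-2}\rangle$. Let $A'$ be the $(2q-1)\times((q-1)+(p-1)q)$ matrix with entries $A'_{i,j}=e_{pi+j-qp}$, where $e_0=1$ and $e_k=0$ for $k<0$ or $k>qp$. Let $B$ be any $(2q-1)\times(2q-1)$ submatrix of $A'$ (columns kept in their original order). Then (i) if the product $\prod_{i=1}^{2q-1}B_{i,2q-i}$ of the antidiagonal entries of $B$ is $0$, then $\det(B)=0$; and (ii) the product of the antidiagonal entries of $B$ lies in $L$. *)

From HB Require Import structures.
From mathcomp Require Import all_boot all_algebra.
From mathcomp Require Import mpoly.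

Set Implicit Arguments.
Unset Strict Implicit.
Unset Printing Implicit Defensive.

Import GRing.Theory.
Local Open Scope ring_scope.

(* The polynomial ring S = k[e_1,...,e_n] is {mpoly k[n]}; the variable e_m
   (1 <= m <= n) is 'X_(m-1). Convention of the paper: e_0 = 1 and e_m = 0 for
   m < 0 or m > n. *)
Definition evar (k : fieldType) (n : nat) (m : int) : {mpoly k[n]} :=
  match m with
  | Posz 0 => 1
  | Posz m'.+1 =>
      match (insub m' : option 'I_n) with Some i => 'X_i | None => 0 end
  | Negz _ => 0
  end.

Definition in_ideal (R : comNzRingType) (gens : seq R) (x : R) : Prop :=
  exists c : 'I_(size gens) -> R,
    x = \sum_(i < size gens) c i * gens`_i.

Definition in_L (k : fieldType) (p q : nat) (x : {mpoly k[q * p]}) : Prop :=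
  forall j : nat, (1 <= j <= (q - 1) * p + 1)%N ->
    in_ideal [seq evar k (q * p) (Posz (j + t)) | t <- iota 0 (p - 1)] x.

Definition Aprime (k : fieldType) (p q : nat) :
  'M[{mpoly k[q * p]}]_((2 * q).-1, (q - 1) + (p - 1) * q) :=
  \matrix_(i, j) evar k (q * p)
     ((p * i.+1 + j.+1)%N%:Z - (q * p)%N%:Z)%R.

From HB Require Import structures.
From mathcomp Require Import all_boot all_algebra.
From mathcomp Require Import mpoly.
From mathcomp Require Import order perm zify.
Import Order.TTheory GRing.Theory Num.Theory.
Local Open Scope ring_scope.

(* The entry of B in row x and column c is e_m with m = p(x+1) + f(c) + 1 - qp,
   an index increasing in both x and c.  If an antidiagonal entry e_m vanishes,
   then m < 0 or m > qp, so the whole upper-left (resp. lower-right) block cut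
   out by that entry vanishes; its dimensions add up to 2q, which kills every
   term of the Leibniz expansion of det B.
   Along the antidiagonal, read from the top row, the index starts at most at
   p - 1, ends at least at (q-1)p + 1, and grows by at most p - 1 per step since
   f is strictly increasing; hence it meets every window [j, j+p-2], and the
   antidiagonal product is a multiple of one of the generators of the j-th
   ideal. *)

Lemma evar_eq0 (k : fieldType) (n : nat) (m : int) :
  (evar k n m == 0) = (m < 0) || (n%:Z < m).
Proof.
case: m => [[|m]|m] /=; [by rewrite oner_eq0| |by rewrite eqxx].
rewrite ltz_nat ltnS leqNgt.
case: insubP => [i _ <-|/negbTE ->]; last by rewrite eqxx.
rewrite ltn_ord; apply/negbTE/eqP => /(congr1 (mcoeff U_(i))).
by rewrite mcoeffXU eqxx mcoeff0 => /eqP; rewrite oner_eq0.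
Qed.

Lemma evar_mem_window (k : fieldType) (n j w : nat) (m : int) :
  j%:Z <= m < (j + w)%N%:Z ->
  evar k n m \in [seq evar k n (Posz (j + t)) | t <- iota 0 w].
Proof.
case: m => [m|m] //=; rewrite !lez_nat ltz_nat => /andP[jm mw].
by rewrite -(subnKC jm) map_f // mem_iota; lia.
Qed.

Lemma in_ideal_prod {R : comNzRingType} {gens : seq R} {I : finType}
    {F : I -> R} (i : I) :
  F i \in gens -> in_ideal gens (\prod_j F j).
Proof.
rewrite -index_mem => gens_Fi; pose t := Ordinal gens_Fi.
exists (fun u => if u == t then \prod_(j | j != i) F j else 0).
rewrite (bigD1 t) //= eqxx [X in _ + X]big1 => [|u /negbTE ->]; last first.
  exact: mul0r.
by rewrite nth_index -?index_mem // addr0 (bigD1 i) //= mulrC.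
Qed.

Lemma bounded_increments_hit_window (u : nat -> int) (n : nat) (lo w : int) :
  u 0%N < lo + w -> lo <= u n ->
  (forall x, (x < n)%N -> u x.+1 <= u x + w) ->
  exists2 x, (x <= n)%N & lo <= u x < lo + w.
Proof.
move=> u0 un step; elim: n un step => [|n IHn] un step.
  by exists 0%N; rewrite // un u0.
have [lo_un|un_lo] := lerP lo (u n).
  have [x xn window_x] := IHn lo_un (fun x xn => step x (ltnW xn)).
  by exists x => //; apply: leqW.
exists n.+1 => //; rewrite un /=; have := step n (ltnSn n); lia.
Qed.

Lemma card_ord_lt (n t : nat) : (t <= n)%N -> #|[set x : 'I_n | (x < t)%N]| = t.
Proof.
move=> tn; have widen_inj : injective (widen_ord tn) by move=> a b [] /val_inj.
rewrite -[RHS](card_ord t) -(card_imset _ widen_inj).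
apply: eq_card => x; rewrite inE; apply/idP/imsetP => [xt|[y _ ->]].
  by exists (Ordinal xt) => //; apply: val_inj.
exact: (ltn_ord y).
Qed.

Lemma card_ord_ge (n t : nat) :
  (t <= n)%N -> #|[set x : 'I_n | (t <= x)%N]| = (n - t)%N.
Proof.
move=> tn.
have -> : [set x : 'I_n | (t <= x)%N] = ~: [set x : 'I_n | (x < t)%N].
  by apply/setP => x; rewrite !inE leqNgt.
by rewrite cardsCs setCK card_ord card_ord_lt.
Qed.

Section ZeroBlockDeterminant.

Variables (R : comNzRingType) (n : nat) (M : 'M[R]_n).

Lemma det_eq0_zero_block (I J : {set 'I_n}) :
  {in I & J, forall i j, M i j = 0} -> (n < #|I| + #|J|)%N -> \det M = 0.
Proof.
move=> MIJ0 IJ_gt; apply: big1 => s _.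
have : (0 < #|[set s x | x in I] :&: J|)%N.
  have := cardsUI [set s x | x in I] J.
  rewrite card_imset; last exact: perm_inj.
  have := max_card ([set s x | x in I] :|: J); rewrite card_ord; lia.
case/card_gt0P => _ /setIP[/imsetP[i Ii ->] Jsi].
by rewrite (bigD1 i) //= MIJ0 // mul0r mulr0.
Qed.

Lemma det_eq0_upper_left_block (i : 'I_n) :
  (forall x c : 'I_n, (x <= i)%N -> (c <= rev_ord i)%N -> M x c = 0) ->
  \det M = 0.
Proof.
move=> M0; have i_lt := ltn_ord i.
apply: (@det_eq0_zero_block [set x : 'I_n | (x < i.+1)%N]
                             [set c : 'I_n | (c < n - i)%N]).
  by move=> x c; rewrite !inE => xi ci; apply: M0 => /=; lia.
rewrite !card_ord_lt; lia.
Qed.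

Lemma det_eq0_lower_right_block (i : 'I_n) :
  (forall x c : 'I_n, (i <= x)%N -> (rev_ord i <= c)%N -> M x c = 0) ->
  \det M = 0.
Proof.
move=> M0; have i_lt := ltn_ord i.
apply: (@det_eq0_zero_block [set x : 'I_n | (i <= x)%N]
                             [set c : 'I_n | (n - i.+1 <= c)%N]).
  by move=> x c; rewrite !inE => xi ci; apply: M0.
rewrite !card_ord_ge; lia.
Qed.

End ZeroBlockDeterminant.

Section AprimeMinor.

Variables (k : fieldType) (p q : nat).
Local Notation n := (2 * q).-1.
Variable f : 'I_n -> 'I_((q - 1) + (p - 1) * q).
Hypothesis f_incr : forall x y : 'I_n, (x < y)%N -> (f x < f y)%N.
Hypotheses (p_gt0 : (0 < p)%N) (q_gt0 : (0 < q)%N).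
Local Notation B := (colsub f (Aprime k p q)).

Definition entry_index (x c : 'I_n) : int :=
  (p * x.+1 + (f c).+1)%N%:Z - (q * p)%N%:Z.

Lemma colsub_AprimeE (x c : 'I_n) : B x c = evar k (q * p) (entry_index x c).
Proof. by rewrite !mxE. Qed.

Lemma entry_index_le {x x' c c' : 'I_n} :
  (x <= x')%N -> (c <= c')%N -> entry_index x c <= entry_index x' c'.
Proof.
move=> xx' cc'; have fcc' : (f c <= f c')%N.
  by case: (ltngtP c c') cc' => // [/f_incr/ltnW|/val_inj ->].
rewrite /entry_index lerD2r lez_nat leq_add ?leq_mul //.
Qed.

Lemma det_colsub_Aprime_eq0 : \prod_i B i (rev_ord i) = 0 -> \det B = 0.
Proof.
move/eqP/prodf_eq0 => [i _]; rewrite colsub_AprimeE evar_eq0 => /orP[neg|big].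
  apply: (@det_eq0_upper_left_block _ _ _ i) => x c xi ci.
  apply/eqP; rewrite colsub_AprimeE evar_eq0.
  by rewrite (le_lt_trans (entry_index_le xi ci)).
apply: (@det_eq0_lower_right_block _ _ _ i) => x c ix ic.
by apply/eqP; rewrite colsub_AprimeE evar_eq0 (lt_le_trans big) ?orbT //;
  exact: entry_index_le.
Qed.

Definition antidiag_index (x : 'I_n) : int := entry_index x (rev_ord x).

Lemma antidiag_index_step (x y : 'I_n) :
  val y = x.+1 -> antidiag_index y <= antidiag_index x + (p - 1)%N%:Z.
Proof.
move=> yE; have f_rev : (f (rev_ord y) < f (rev_ord x))%N.
  by apply: f_incr; have := ltn_ord y; rewrite /= yE; lia.
rewrite /antidiag_index /entry_index yE; lia.
Qed.

Lemma antidiag_index_first (x : 'I_n) :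
  val x = 0%N -> antidiag_index x <= (p - 1)%N%:Z.
Proof.
move=> x0; have := ltn_ord (f (rev_ord x)); have := mulnBl p 1 q.
rewrite /antidiag_index /entry_index x0 mul1n; nia.
Qed.

Lemma antidiag_index_last (x : 'I_n) :
  val x = n.-1 -> ((q - 1) * p + 1)%N%:Z <= antidiag_index x.
Proof.
move=> xE; have := ltn_ord x.
rewrite /antidiag_index /entry_index xE; nia.
Qed.

Lemma antidiag_index_hit_window (j : nat) :
  (1 <= j <= (q - 1) * p + 1)%N ->
  exists x : 'I_n, j%:Z <= antidiag_index x < (j + (p - 1))%N%:Z.
Proof.
move=> /andP[j_gt0 j_le]; have n_gt0 : (0 < n)%N by lia.
pose x0 := Ordinal n_gt0; pose u m := antidiag_index (insubd x0 m).
have val_insubd_lt m : (m < n)%N -> val (insubd x0 m) = m.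
  by move=> m_lt; rewrite insubdK.
have [|||m m_le window_m] := @bounded_increments_hit_window u n.-1 j (p - 1)%N.
- rewrite /u; have := antidiag_index_first _ (val_insubd_lt 0%N n_gt0); lia.
- rewrite /u; have := antidiag_index_last _ (val_insubd_lt n.-1 _); lia.
- by move=> m m_lt; apply: antidiag_index_step; rewrite !val_insubd_lt //; lia.
by exists (insubd x0 m); rewrite PoszD.
Qed.

Lemma prod_antidiag_colsub_Aprime_in_L : @in_L k p q (\prod_i B i (rev_ord i)).
Proof.
move=> j /antidiag_index_hit_window[x window_x].
by apply: (in_ideal_prod x); rewrite colsub_AprimeE evar_mem_window.
Qed.

End AprimeMinor.

Theorem proposition5p3 (k : fieldType) (p q : nat)
  (hp : (3 <= p)%N) (hq : (1 <= q)%N)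
  (f : 'I_((2 * q).-1) -> 'I_((q - 1) + (p - 1) * q))
  (hf : forall x y : 'I_((2 * q).-1), (x < y)%N -> (f x < f y)%N) :
  let B := colsub f (Aprime k p q) in
  let adp := \prod_(i < (2 * q).-1) B i (rev_ord i) in
  (adp = 0 -> \det B = 0) /\ @in_L k p q adp.
Proof.
move=> B adp; split; first exact: det_colsub_Aprime_eq0.
by apply: prod_antidiag_colsub_Aprime_in_L => //; apply: leq_trans hp.
Qed.
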